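(* Let $M$ be a $0/1$-matrix, let $B$ be a block of $M$, let $i$ be an entry of the input boundary $B^-$, and let $\sigma_1(i),\sigma_2(i)$ be two entries of the output boundary $B^+$ that are both reachable from $i$, with $\sigma_1(i)<\sigma_2(i)$ in the output-boundary order. If there is an entry $\sigma(j)$ of $B^+$ that is reachable from some entry $j\in B^-$ and satisfies $\sigma_1(i)<\sigma(j)<\sigma_2(i)$, then $\sigma(j)$ is also reachable from $i$.
   Context: Let $M$ be an $m\times n$ $0/1$-matrix with entries indexed $(r,s)$ (rows increasing from bottom to top, columns from left to right). A path from $(k,l)$ to $(i,j)$ is a sequence of $1$-entries starting at $(k,l)$ and ending at $(i,j)$ in which each step goes from $(r,s)$ to $(r+1,s)$, $(r,s+1)$ or $(r+1,s+1)$; $(i,j)$ is reachable from $(k,l)$ if such a path exists. A block $B$ is the submatrix formed by rows $r^-\le r\le r^+$ and columns $s^-\le s\le s^+$. Its input boundary $B^-$ consists of the entries in row $r^-$ or column $s^-$ of $B$, ordered: first row $r^-$ from column $s^+$ down to $s^-$, then the remaining entries of column $s^-$ from row $r^-+1$ up to $r^+$. Its output boundary $B^+$ consists of the entries in row $r^+$ or column $s^+$ of $B$, ordered: first column $s^+$ from row $r^-$ up to $r^+$, then the remaining entries of row $r^+$ from column $s^+-1$ down to $s^-$. *)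

From mathcomp Require Import all_boot all_algebra.
Set Implicit Arguments. Unset Strict Implicit. Unset Printing Implicit Defensive.

(* An entry (r, s) of an m x n matrix: r = row (increasing bottom to top),
   s = column (increasing left to right). *)
Definition entry (m n : nat) := ('I_m * 'I_n)%type.

Section Defs.
Variables (m n : nat).
Implicit Types (M : 'M[bool]_(m, n)) (x y : entry m n).

Definition one_entry M x : bool := M x.1 x.2.

Definition step x y : bool :=
  [|| ((y.1 : nat) == x.1.+1) && ((y.2 : nat) == x.2),
      ((y.1 : nat) == x.1) && ((y.2 : nat) == x.2.+1)
    | ((y.1 : nat) == x.1.+1) && ((y.2 : nat) == x.2.+1)].

Definition is_path M x (p : seq (entry m n)) y : bool :=
  [&& path step x p, all (one_entry M) (x :: p) & last x p == y].

Definition reachable M x y : Prop := exists p, is_path M x p y.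
End Defs.

Record block := Block { r_lo : nat; r_hi : nat; c_lo : nat; c_hi : nat }.

Definition valid_block (m n : nat) (B : block) : bool :=
  [&& r_lo B <= r_hi B, r_hi B < m, c_lo B <= c_hi B & c_hi B < n].

Definition in_block (m n : nat) (B : block) (x : entry m n) : bool :=
  [&& r_lo B <= x.1, x.1 <= r_hi B, c_lo B <= x.2 & x.2 <= c_hi B].

Definition in_input (m n : nat) (B : block) (x : entry m n) : bool :=
  in_block B x && (((x.1 : nat) == r_lo B) || ((x.2 : nat) == c_lo B)).

Definition in_output (m n : nat) (B : block) (x : entry m n) : bool :=
  in_block B x && (((x.1 : nat) == r_hi B) || ((x.2 : nat) == c_hi B)).

(* position in the output-boundary order: first column c_hi from row r_lo
   up to r_hi, then row r_hi from column c_hi - 1 down to c_lo *)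
Definition out_pos (m n : nat) (B : block) (x : entry m n) : nat :=
  if (x.2 : nat) == c_hi B then x.1 - r_lo B
  else (r_hi B - r_lo B) + (c_hi B - x.2).

Definition out_lt (m n : nat) (B : block) (x y : entry m n) : bool :=
  out_pos B x < out_pos B y.

From mathcomp Require Import all_boot all_algebra zify.
Set Implicit Arguments. Unset Strict Implicit. Unset Printing Implicit Defensive.

(* Paths move up and right by unit steps, so the paths P1 and P2 from i to
   s1 and s2 are staircases, and an entry lying weakly north-west of some
   point of a staircase and weakly south-east of another lies on it. Let R be
   the region north-west of P1 and south-east of P2; it contains sj. Walk
   along a path from j to sj. An entry of R on the input boundary is, like i,
   in the bottom row or left column of B, which puts it on P1 or P2; and a
   unit step entering R from outside has to cross P1 or P2, so it lands on one
   of them.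
   Hence every point of the walk inside R is reachable from i: it is either
   such a landing point or follows a reachable point of R. *)

Lemma path_crossing (T : eqType) (e : rel T) (a : pred T) x0 p :
  path e x0 p -> ~~ a x0 -> has a (x0 :: p) ->
  exists x y, [/\ x \in x0 :: p, y \in x0 :: p, e x y, ~~ a x & a y].
Proof.
elim: p x0 => [|x1 p IH] x0 /=; first by move=> _ /negbTE->.
move=> /andP[ex pth] /negbTE nax; rewrite nax /= => hasp.
have [ax1 | nax1] := boolP (a x1); first by exists x0, x1; rewrite !inE !eqxx orbT nax.
have [x [y [xP yP xy nx ay]]] := IH x1 pth nax1 hasp.
by exists x, y; split; rewrite // in_cons ?xP ?yP orbT.
Qed.

Lemma path_le_head (T : eqType) (e : rel T) (c : T -> nat) x0 p z :
  (forall x y, e x y -> c x <= c y) -> path e x0 p -> z \in x0 :: p -> c x0 <= c z.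
Proof.
move=> e_c pth; rewrite in_cons => /predU1P[-> // | zp].
have c_trans : transitive [rel x y | c x <= c y] by move=> ? ? ?; apply: leq_trans.
have cpath : path [rel x y | c x <= c y] x0 p by apply: sub_path pth => x y /e_c.
exact: allP (order_path_min c_trans cpath) z zp.
Qed.

(* Reading f as the northward and g as the eastward coordinate, [nw_of f g s y]
   says that y is weakly north-west of some point of s; [nw_of g f] is then
   "weakly south-east of", so each lemma below also holds with f and g swapped. *)
Definition nw_of (T : Type) (f g : T -> nat) (s : seq T) (y : T) : bool :=
  has (fun u => (f u <= f y) && (g y <= g u)) s.

Section Crossing.
Variables (T : eqType) (e : rel T) (f g : T -> nat).
Hypothesis e_f : forall x y, e x y -> f x <= f y <= (f x).+1.
Hypothesis e_g : forall x y, e x y -> g x <= g y <= (g x).+1.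
Hypothesis fg_inj : forall x y, f x = f y -> g x = g y -> x = y.

Lemma nw_of_behead x0 x1 p y : e x0 x1 -> y != x0 -> g x0 <= g y ->
  nw_of f g [:: x0, x1 & p] y -> nw_of f g (x1 :: p) y.
Proof.
move=> ex ne gy; rewrite {1}/nw_of /= => /orP[/andP[fx gx] | //].
have /andP[_ f1] := e_f ex; have /andP[g1 _] := e_g ex.
have lt : f x0 < f y.
  rewrite ltn_neqAle fx andbT; apply: contra ne => /eqP ef; apply/eqP.
  by apply: fg_inj => //; apply/anti_leq; rewrite gx gy.
by rewrite /nw_of /= (leq_trans f1 lt) (leq_trans gx g1).
Qed.

Lemma se_of_step_into_nw x0 p x y : path e x0 p -> e x y ->
  ~~ nw_of f g (x0 :: p) x -> nw_of f g (x0 :: p) y -> g x0 <= g y ->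
  nw_of g f (x0 :: p) y.
Proof.
move=> pth exy nwx /hasP[w wP /andP[fw gw]] gy.
have /andP[_ fyx] := e_f exy; have /andP[gxy _] := e_g exy.
have below z : z \in x0 :: p -> f z <= f x -> g z < g x.
  by move=> zP fz; rewrite ltnNge; apply: contra nwx => gz; apply/hasP; exists z; rewrite ?fz.
have [fy0 | fy0] := leqP (f y) (f x0).
  by apply/hasP; exists x0; rewrite ?mem_head ?gy.
have reach_row : has (fun z => f y <= f z) (x0 :: p).
  apply/hasP; exists w; rewrite // (leq_trans fyx) // ltnNge.
  by apply/negP => /(below w wP); rewrite ltnNge (leq_trans gxy gw).
have [u [v [uP vP uv nfu fv]]] := path_crossing pth (negbT (ltn_geF fy0)) reach_row.
have /andP[_ gvu] := e_g uv.
have gux : g u < g x by apply: below => //; rewrite -ltnS (leq_trans _ fyx) // ltnNge.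
by apply/hasP; exists v; rewrite // fv andbT (leq_trans gvu) // (leq_trans gux).
Qed.

End Crossing.

Definition between (T : Type) (f g : T -> nat) (s1 s2 : seq T) (y : T) : bool :=
  nw_of f g s1 y && nw_of g f s2 y.

Section Staircase.
Variables (T : eqType) (e : rel T) (f g : T -> nat).
Hypothesis e_f : forall x y, e x y -> f x <= f y <= (f x).+1.
Hypothesis e_g : forall x y, e x y -> g x <= g y <= (g x).+1.
Hypothesis fg_inj : forall x y, f x = f y -> g x = g y -> x = y.

Let gf_inj x y : g x = g y -> f x = f y -> x = y. Proof. by move=> *; apply: fg_inj. Qed.
Let e_f_le x y : e x y -> f x <= f y. Proof. by case/e_f/andP. Qed.
Let e_g_le x y : e x y -> g x <= g y. Proof. by case/e_g/andP. Qed.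

Lemma nw_se_ge x0 p1 p2 y : path e x0 p1 -> path e x0 p2 ->
  nw_of f g (x0 :: p1) y -> nw_of g f (x0 :: p2) y -> f x0 <= f y /\ g x0 <= g y.
Proof.
move=> pth1 pth2 /hasP[u uP /andP[fu _]] /hasP[d dP /andP[gd _]].
split; [exact: leq_trans (path_le_head e_f_le pth1 uP) fu |
        exact: leq_trans (path_le_head e_g_le pth2 dP) gd].
Qed.

Lemma mem_path_nw_se x0 p y : path e x0 p ->
  nw_of f g (x0 :: p) y -> nw_of g f (x0 :: p) y -> y \in x0 :: p.
Proof.
elim: p x0 => [|x1 p IH] x0 pth nwy sey.
  move: nwy sey; rewrite /nw_of /= !orbF mem_seq1 => /andP[fx gx] /andP[gy fy].
  by apply/eqP/fg_inj; apply/anti_leq; rewrite ?fx ?fy ?gx ?gy.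
have [-> | ne] := eqVneq y x0; first exact: mem_head.
have [fy gy] := nw_se_ge pth pth nwy sey.
have [ex pth1] := andP pth.
rewrite in_cons (negbTE ne); apply: IH pth1 _ _.
  exact: (nw_of_behead e_f e_g fg_inj ex ne gy nwy).
exact: (nw_of_behead e_g e_f gf_inj ex ne fy sey).
Qed.

Lemma step_into_between x0 p1 p2 x y : path e x0 p1 -> path e x0 p2 -> e x y ->
  ~~ between f g (x0 :: p1) (x0 :: p2) x -> between f g (x0 :: p1) (x0 :: p2) y ->
  (y \in x0 :: p1) || (y \in x0 :: p2).
Proof.
move=> pth1 pth2 exy; rewrite negb_and => /orP[nwx | sex] /andP[nwy sey];
  have [fy gy] := nw_se_ge pth1 pth2 nwy sey.
  by rewrite mem_path_nw_se // (se_of_step_into_nw e_f e_g pth1 exy nwx nwy gy).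
by rewrite orbC mem_path_nw_se // (se_of_step_into_nw e_g e_f pth2 exy sex sey fy).
Qed.

Lemma between_start x0 p1 p2 y : path e x0 p1 -> path e x0 p2 ->
  between f g (x0 :: p1) (x0 :: p2) y -> (f y <= f x0) || (g y <= g x0) ->
  (y \in x0 :: p1) || (y \in x0 :: p2).
Proof.
move=> pth1 pth2 /andP[nwy sey]; have [fy gy] := nw_se_ge pth1 pth2 nwy sey.
case/orP=> [fy0 | gy0]; apply/orP; [left | right]; apply: mem_path_nw_se => //;
  by apply/hasP; exists x0; rewrite ?mem_head ?fy0 ?gy0 ?fy ?gy.
Qed.

End Staircase.

Section Entries.
Context {m n : nat}.
Implicit Types (x y : entry m n) (B : block).

Definition row x : nat := x.1.
Definition col x : nat := x.2.

Lemma step_row x y : step x y -> row x <= row y <= (row x).+1.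
Proof. by rewrite /step /row => /or3P[] /andP[/eqP-> _]; rewrite ?leqnn ?leqnSn. Qed.

Lemma step_col x y : step x y -> col x <= col y <= (col x).+1.
Proof. by rewrite /step /col => /or3P[] /andP[_ /eqP->]; rewrite ?leqnn ?leqnSn. Qed.

Lemma row_col_inj x y : row x = row y -> col x = col y -> x = y.
Proof. by case: x y => [r s] [r' s']; rewrite /row /col /= => /ord_inj-> /ord_inj->. Qed.

Lemma out_lt_nw B x y :
  in_output B x -> in_output B y -> out_lt B x y -> (row x <= row y) && (col y <= col x).
Proof.
rewrite /in_output /in_block /out_lt /out_pos /row /col.
case/andP=> /and4P[? ? ? ?] /orP[] /eqP ? /andP[/and4P[? ? ? ?] /orP[] /eqP ?].
all: by case: eqP; case: eqP => *; apply/andP; split; lia.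
Qed.

Lemma in_input_le B x y :
  in_input B x -> in_input B y -> (row y <= row x) || (col y <= col x).
Proof.
rewrite /in_input /in_block /row /col => /andP[/and4P[rx _ cx _] _].
by case/andP=> _ /orP[] /eqP->; rewrite ?rx ?cx ?orbT.
Qed.

Variable M : 'M[bool]_(m, n).

Lemma reachable_mem_path a p b z : is_path M a p b -> z \in a :: p -> reachable M a z.
Proof.
case/and3P=> pth ones _; rewrite in_cons => /predU1P[-> | /splitPr zp].
  by exists [::]; rewrite /is_path /= eqxx andbT; case/andP: ones => ->.
case: zp pth ones => p1 p2; rewrite cat_path /= all_cat /=.
case/and3P=> pth1 ez _ /and3P[oa ones1 /andP[oz _]]; exists (rcons p1 z).
by rewrite /is_path rcons_path pth1 ez /= oa all_rcons oz ones1 last_rcons eqxx.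
Qed.

Lemma reachable_rcons a b c : reachable M a b -> step b c -> one_entry M c -> reachable M a c.
Proof.
case=> p /and3P[pth ones /eqP end_b] bc oc; exists (rcons p c).
by rewrite /is_path rcons_path pth end_b bc last_rcons eqxx /= all_rcons oc andbT.
Qed.

Lemma reachable_via_entries (R : pred (entry m n)) a x p y :
  is_path M x p y -> R y -> (R x -> reachable M a x) ->
  (forall u v, step u v -> ~~ R u -> R v -> reachable M a v) ->
  reachable M a y.
Proof.
case/and3P=> pth ones /eqP <-{y}.
elim: p x pth ones => [|x1 p IH] x //=; first by move=> _ _ Ry /(_ Ry).
case/andP=> ex pth /and3P[_ o1 ones] Ry reach_x enter; apply: IH => //=; first by rewrite o1.
move=> R1; have [Rx | nRx] := boolP (R x); first exact: reachable_rcons (reach_x Rx) ex o1.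
exact: enter ex nRx R1.
Qed.

End Entries.

Theorem corollary1 (m n : nat) (M : 'M[bool]_(m, n)) (B : block)
  (hB : valid_block m n B) (i s1 s2 j sj : entry m n) :
  in_input B i -> in_output B s1 -> in_output B s2 ->
  reachable M i s1 -> reachable M i s2 -> out_lt B s1 s2 ->
  in_input B j -> in_output B sj -> reachable M j sj ->
  out_lt B s1 sj -> out_lt B sj s2 ->
  reachable M i sj.
Proof.
move=> iI s1O s2O [p1 P1] [p2 P2] _ jI sjO [q Q] lt1j ltj2.
have [[pth1 _ /eqP end1] [pth2 _ /eqP end2]] := (and3P P1, and3P P2).
have reach_on_paths y : (y \in i :: p1) || (y \in i :: p2) -> reachable M i y.
  by case/orP; [apply: reachable_mem_path P1 | apply: reachable_mem_path P2].
apply: (reachable_via_entries (R := between row col (i :: p1) (i :: p2)) Q).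
- have /andP[r1 c1] := out_lt_nw s1O sjO lt1j.
  have /andP[r2 c2] := out_lt_nw sjO s2O ltj2.
  apply/andP; split; apply/hasP; [exists s1 | exists s2];
    by rewrite ?r1 ?c1 ?r2 ?c2 // -?end1 -?end2 mem_last.
- move=> Bj; apply: reach_on_paths.
  exact: (between_start step_row step_col row_col_inj pth1 pth2 Bj (in_input_le iI jI)).
- move=> x y xy Bx By; apply: reach_on_paths.
  exact: (step_into_between step_row step_col row_col_inj pth1 pth2 xy Bx By).
Qed.
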